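(* Let $\mathcal{D}$ be a distribution on $\mathbb{R}^d\times\mathbb{R}$ with $\|\mathbf{x}\|_2\le1$ and $|y|\le B$ almost surely. The GAERR algorithm (with any sampling distribution $(q_1,\dots,q_d)$ and budget $k$) generates gradient estimates satisfying, for all $t$, $$\mathbb{E}_{\mathcal{D},A}\big[\|\widetilde{\mathbf{g}}_t\|_2^2\big]\le 4B^2\Big(\frac1k\mathbb{E}_{\mathcal{D},A}\big[\|\widetilde{\mathbf{x}}_{t,r}\|_2^2\big]+1\Big).$$
   Context: Algorithm GAERR (parameters $B,\eta>0$, probabilities $q_i$ summing to $1$, integer budget $k>0$; i.i.d. examples $(\mathbf{x}_t,y_t)\sim\mathcal{D}$): initialize $\mathbf{w}_1\ne0$, $\|\mathbf{w}_1\|_2\le B$. For each $t$: for $r=1..k$ draw $i_{t,r}$ with probability $q_{i_{t,r}}$ and set $\widetilde{\mathbf{x}}_{t,r}=\frac{1}{q_{i_{t,r}}}\mathbf{x}_t[i_{t,r}]\mathbf{e}_{i_{t,r}}$ (the $\widetilde{\mathbf{x}}_{t,r}$, $r=1..k$, are identically distributed); $\widetilde{\mathbf{x}}_t=\frac1k\sum_r\widetilde{\mathbf{x}}_{t,r}$; draw $j_t$ with probability $p_j=w_{t,j}^2/\|\mathbf{w}_t\|_2^2$ and set $\widetilde\phi_t=\frac{w_{t,j_t}}{p_{j_t}}\mathbf{x}_t[j_t]-y_t$; $\widetilde{\mathbf{g}}_t=\widetilde\phi_t\widetilde{\mathbf{x}}_t$; $\mathbf{v}_t=\mathbf{w}_t-\eta\widetilde{\mathbf{g}}_t$;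 $\mathbf{w}_{t+1}=\mathbf{v}_tB/\max\{\|\mathbf{v}_t\|_2,B\}$. All draws independent. $\mathbb{E}_{\mathcal{D},A}$ is expectation over examples and algorithm randomness. *)

From HB Require Import structures.
From mathcomp Require Import all_boot all_order all_algebra.
From mathcomp Require Import all_classical all_reals all_analysis.
Set Implicit Arguments. Unset Strict Implicit. Unset Printing Implicit Defensive.
Import Order.TTheory GRing.Theory Num.Theory.
Local Open Scope ring_scope.

Section GAERR.
Variables (R : realType) (d k : nat).

Notation vec := 'rV[R]_d.

Definition sqn (v : vec) : R := \sum_(i < d) v 0 i ^+ 2.
Definition norm2 (v : vec) : R := Num.sqrt (sqn v).

(* probability of drawing coordinate j : w_j^2/||w||^2
   (convention: uniform if w = 0, a case the paper never considers) *)
Definition pj (w : vec) (j : 'I_d) : R :=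
  if sqn w == 0 then d%:R^-1 else w 0 j ^+ 2 / sqn w.

Definition xtil_r (q : 'I_d -> R) (x : vec) (i : 'I_d) : vec :=
  (x 0 i / q i) *: delta_mx 0 i.

Definition xtil (q : 'I_d -> R) (x : vec) (ii : {ffun 'I_k -> 'I_d}) : vec :=
  k%:R^-1 *: \sum_(r < k) xtil_r q x (ii r).

Definition phitil (w x : vec) (y : R) (j : 'I_d) : R :=
  w 0 j / pj w j * x 0 j - y.

Definition gtil (q : 'I_d -> R) (w x : vec) (y : R)
  (ii : {ffun 'I_k -> 'I_d}) (j : 'I_d) : vec :=
  phitil w x y j *: xtil q x ii.

Definition update (B eta : R) (q : 'I_d -> R) (w x : vec) (y : R)
  (ii : {ffun 'I_k -> 'I_d}) (j : 'I_d) : vec :=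
  let v := w - eta *: gtil q w x y ii j in
  (B / Num.max (norm2 v) B) *: v.

Definition qprod (q : 'I_d -> R) (ii : {ffun 'I_k -> 'I_d}) : R :=
  \prod_(r < k) q (ii r).

Local Open Scope ereal_scope.

(* Expectation over one round of fresh randomness (example (x,y) ~ D,
   given as the law of (X,Y) on the probability space P, the k index
   draws i_{t,r} ~ q and the draw j_t ~ p(w)), all independent,
   for the current iterate w. *)
Definition step_E (d0 : measure_display) (T : measurableType d0)
  (P : probability T R) (X : T -> vec) (Y : T -> R) (q : 'I_d -> R) (w : vec)
  (F : vec -> R -> {ffun 'I_k -> 'I_d} -> 'I_d -> \bar R) : \bar R :=
  \int[P]_om (\sum_(ii : {ffun 'I_k -> 'I_d}) \sum_(j < d)
      ((qprod q ii * pj w j)%:E * F (X om) (Y om) ii j)).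

(* EW n h = E_{D,A}[ h(w_{n+1}) ]  (iterates indexed from w_1 = w1). *)
Fixpoint EW (d0 : measure_display) (T : measurableType d0)
  (P : probability T R) (X : T -> vec) (Y : T -> R) (B eta : R)
  (q : 'I_d -> R) (w1 : vec) (n : nat) (h : vec -> \bar R) : \bar R :=
  match n with
  | 0%N => h w1
  | n'.+1 => EW P X Y B eta q w1 n'
      (fun w => step_E P X Y q w (fun x y ii j => h (update B eta q w x y ii j)))
  end.

Definition E_sq_g (d0 : measure_display) (T : measurableType d0)
  (P : probability T R) (X : T -> vec) (Y : T -> R) (B eta : R)
  (q : 'I_d -> R) (w1 : vec) (n : nat) : \bar R :=
  EW P X Y B eta q w1 n
    (fun w => step_E P X Y q w (fun x y ii j => (norm2 (gtil q w x y ii j) ^+ 2)%:E)).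

(* E_{D,A}[ ||x~_{t,r}||_2^2 ]  (the same for every t and r) *)
Definition E_sq_xr (d0 : measure_display) (T : measurableType d0)
  (P : probability T R) (X : T -> vec) (q : 'I_d -> R) : \bar R :=
  \int[P]_om (\sum_(i < d) (q i * norm2 (xtil_r q (X om) i) ^+ 2)%:E).

End GAERR.

From HB Require Import structures.
From mathcomp Require Import all_boot all_order all_algebra.
From mathcomp Require Import all_classical all_reals all_analysis.
From mathcomp Require Import ring lra measurable_realfun.
Set Implicit Arguments. Unset Strict Implicit. Unset Printing Implicit Defensive.
Import Order.TTheory GRing.Theory Num.Theory.
Local Open Scope ring_scope.

(* The two draws of a round are independent, so E||g~||^2 factors as
   E_j[phi~^2] * E_i[||x~||^2].  With p_j = w_j^2/||w||^2 the importance
   weights cancel and E_j[phi~^2] <= 2 ||w||^2 ||x||^2 + 2 y^2 <= 4 B^2.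
   Expanding ||x~||^2 over pairs of the k i.i.d. draws, the k diagonal pairs
   contribute E||x~_{t,r}||^2 each, and the off-diagonal ones the squared mean,
   which is at most ||x||^2 <= 1.  This bound holds almost surely for every
   iterate in the ball of radius B, and the projection step keeps all iterates
   there, so it survives every round of the expectation. *)

Section Norms.
Variables (R : realType) (d : nat).
Implicit Types (v w x : 'rV[R]_d) (c : R).

Lemma sqn_ge0 v : 0 <= sqn v.
Proof. by apply: sumr_ge0 => i _; exact: sqr_ge0. Qed.

Lemma sqr_norm2 v : norm2 v ^+ 2 = sqn v.
Proof. by rewrite /norm2 sqr_sqrtr // sqn_ge0. Qed.

Lemma sqn_le_sqr c v : norm2 v <= c -> sqn v <= c ^+ 2.
Proof.
move=> vc; have c0 : 0 <= c by apply: le_trans vc; exact: sqrtr_ge0.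
by rewrite -sqr_norm2 lerXn2r // nnegrE sqrtr_ge0.
Qed.

Lemma sqn_scale c v : sqn (c *: v) = c ^+ 2 * sqn v.
Proof. by rewrite /sqn mulr_sumr; apply: eq_bigr => i _; rewrite mxE exprMn. Qed.

Lemma norm2_scale c v : norm2 (c *: v) = `|c| * norm2 v.
Proof. by rewrite /norm2 sqn_scale sqrtrM ?sqr_ge0 // sqrtr_sqr. Qed.

Lemma sqn_delta (i : 'I_d) : sqn (delta_mx 0 i : 'rV[R]_d) = 1.
Proof.
rewrite /sqn (bigD1 i) //= big1 ?addr0; first by rewrite mxE !eqxx expr1n.
by move=> j ji; rewrite mxE eqxx /= (negbTE ji) expr0n.
Qed.

Lemma sqn_xtil_r (q : 'I_d -> R) x i : sqn (xtil_r q x i) = (x 0 i / q i) ^+ 2.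
Proof. by rewrite /xtil_r sqn_scale sqn_delta mulr1. Qed.

Lemma xtil_r_coord (q : 'I_d -> R) x i l :
  xtil_r q x i 0 l = if i == l then x 0 i / q i else 0.
Proof. by rewrite /xtil_r !mxE eqxx /= eq_sym; case: eqP; rewrite ?mulr1 ?mulr0. Qed.

End Norms.

Section CoordinateDraw.
Variables (R : realType) (d : nat).
Implicit Types (w x : 'rV[R]_d).

Lemma pj_ge0 w j : 0 <= pj w j.
Proof.
rewrite /pj; case: ifP => _; first by rewrite invr_ge0.
by apply: divr_ge0; [exact: sqr_ge0|exact: sqn_ge0].
Qed.

Lemma sum_pj_le1 w : \sum_(j < d) pj w j <= 1.
Proof.
rewrite /pj; have [s0|s0] := eqVneq (sqn w) 0.
  rewrite sumr_const card_ord; case: (d) => [|n]; first by rewrite mulr0n.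
  by rewrite -[_ *+ n.+1]mulr_natr mulVf // pnatr_eq0.
by rewrite -mulr_suml mulfV.
Qed.

(* Importance weighting by [p_j = w_j^2 / |w|^2] turns [w_j^2 / p_j] into [|w|^2]. *)
Lemma pj_mul_sqr_le w j (a : R) :
  pj w j * (w 0 j / pj w j * a) ^+ 2 <= sqn w * a ^+ 2.
Proof.
have [wj0|wj0] := eqVneq (w 0 j) 0.
  by rewrite wj0 !mul0r expr0n mulr0 mulr_ge0 ?sqn_ge0 ?sqr_ge0.
have sn0 : sqn w != 0.
  apply: contra wj0; rewrite /sqn psumr_eq0 => [/allP/(_ j (mem_index_enum _))|i _].
    by rewrite sqrf_eq0.
  exact: sqr_ge0.
rewrite exprMn mulrA ler_wpM2r ?sqr_ge0 // /pj (negbTE sn0) le_eqVlt; apply/orP; left.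
by apply/eqP; field; rewrite sn0 wj0.
Qed.

Lemma sum_pj_sqr_phitil_le w x (y B : R) :
  norm2 w <= B -> norm2 x <= 1 -> `|y| <= B ->
  \sum_(j < d) pj w j * phitil w x y j ^+ 2 <= 4 * B ^+ 2.
Proof.
move=> wB x1 yB.
have yB2 : y ^+ 2 <= B ^+ 2.
  rewrite -real_normK ?num_real // lerXn2r // nnegrE //.
  by apply: le_trans wB; exact: sqrtr_ge0.
have term j : pj w j * phitil w x y j ^+ 2 <=
    2 * (sqn w * x 0 j ^+ 2) + 2 * (y ^+ 2 * pj w j).
  rewrite /phitil; set a := w 0 j / pj w j * x 0 j.
  have p0 := pj_ge0 w j; have pa := pj_mul_sqr_le w j (x 0 j).
  have : 0 <= pj w j * (a + y) ^+ 2 by rewrite mulr_ge0 ?sqr_ge0.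
  rewrite -/a in pa; nra.
apply: le_trans (ler_sum _ (fun j _ => term j)) _.
rewrite big_split /= -!mulr_sumr -/(sqn x).
have wx : sqn w * sqn x <= B ^+ 2.
  rewrite -[B ^+ 2]mulr1 ler_pM ?sqn_ge0 ?sqn_le_sqr //.
  by rewrite -(expr1n R 2) sqn_le_sqr.
have yp : y ^+ 2 * \sum_(j < d) pj w j <= B ^+ 2.
  by apply: le_trans yB2; rewrite -[leRHS]mulr1 ler_wpM2l ?sqr_ge0 ?sum_pj_le1.
lra.
Qed.

End CoordinateDraw.

Section IndexDraws.
Variables (R : realType) (d k : nat) (q : 'I_d -> R).
Hypotheses (q_ge0 : forall i, 0 <= q i) (sum_q : \sum_(i < d) q i = 1).
Implicit Types (ii : {ffun 'I_k -> 'I_d}) (x : 'rV[R]_d).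

Lemma qprod_ge0 ii : 0 <= qprod q ii.
Proof. exact: prodr_ge0. Qed.

Lemma sum_qprod : \sum_(ii : {ffun 'I_k -> 'I_d}) qprod q ii = 1.
Proof.
rewrite /qprod -(bigA_distr_bigA (fun (_ : 'I_k) (i : 'I_d) => q i)) /=.
by rewrite big1.
Qed.

Lemma sum_qprod_mul (f g : 'I_d -> R) (r s : 'I_k) :
  \sum_(ii : {ffun 'I_k -> 'I_d}) qprod q ii * (f (ii r) * g (ii s)) =
  if r == s then \sum_(i < d) q i * (f i * g i)
  else (\sum_(i < d) q i * f i) * (\sum_(i < d) q i * g i).
Proof.
pose F (r' : 'I_k) (i : 'I_d) :=
  q i * ((if r' == r then f i else 1) * (if r' == s then g i else 1)).
have factor ii : qprod q ii * (f (ii r) * g (ii s)) = \prod_(r' < k) F r' (ii r').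
  rewrite /F !big_split /= -(big_mkcond (fun r' => r' == r)).
  by rewrite -(big_mkcond (fun r' => r' == s)) !big_pred1_eq.
have F1 r' : r' != r -> r' != s -> \sum_(i < d) F r' i = 1.
  by rewrite /F => /negbTE-> /negbTE->; under eq_bigr do rewrite !mulr1.
under eq_bigr do rewrite factor.
rewrite -(bigA_distr_bigA F) (bigD1 r) //=.
have [rs|nrs] := eqVneq r s.
  subst s; rewrite [X in _ * X]big1 ?mulr1 => [|r' nr]; last exact: F1.
  by apply: eq_bigr => i _; rewrite /F eqxx.
rewrite (bigD1 s) 1?eq_sym //= [X in _ * (_ * X)]big1 ?mulr1 => [|r' /andP[nr ns]];
  last exact: F1.
by congr (_ * _); apply: eq_bigr => i _;
  rewrite /F eqxx ?[s == r]eq_sym (negbTE nrs) ?mulr1 ?mul1r.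
Qed.

Lemma xtil_coord x ii l :
  xtil q x ii 0 l = k%:R^-1 * \sum_(r < k) xtil_r q x (ii r) 0 l.
Proof. by rewrite /xtil mxE summxE. Qed.

Lemma sqr_mean_xtil_r_coord_le x l :
  (\sum_(i < d) q i * xtil_r q x i 0 l) ^+ 2 <= x 0 l ^+ 2.
Proof.
under eq_bigr => i _ do rewrite xtil_r_coord (fun_if (GRing.mul (q i))) mulr0.
rewrite -big_mkcond big_pred1_eq; have [->|ql0] := eqVneq (q l) 0.
  by rewrite mul0r expr0n sqr_ge0.
by rewrite mulrC divfK.
Qed.

Lemma sum_pairs_le (a b : R) : (0 < k)%N -> 0 <= b ->
  k%:R^-1 ^+ 2 * \sum_(r < k) \sum_(s < k) (if r == s then a else b) <=
  k%:R^-1 * a + b.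
Proof.
move=> k0 b0; have kR : k%:R != 0 :> R by rewrite pnatr_eq0 -lt0n.
have row r : \sum_(s < k) (if r == s then a else b) = a + b * (k.-1)%:R.
  rewrite (bigD1 r) //= eqxx; congr (_ + _).
  transitivity (\sum_(s < k | s != r) b).
    by apply: eq_bigr => s; rewrite eq_sym => /negbTE->.
  by rewrite (eq_bigl (mem (predC1 r))) // sumr_const cardC1 card_ord mulr_natr.
rewrite (eq_bigr _ (fun r _ => row r)) sumr_const card_ord.
have -> : (k.-1)%:R = k%:R - 1 :> R by rewrite -{2}(prednK k0) -natr1 addrK.
have kb : 0 <= k%:R^-1 * b by rewrite mulr_ge0 ?invr_ge0.
suff -> : k%:R^-1 ^+ 2 * ((a + b * (k%:R - 1)) *+ k) = k%:R^-1 * a + b - k%:R^-1 * b.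
  by rewrite lerBlDr lerDl.
by rewrite -[(_ + _) *+ k]mulr_natr; field.
Qed.

Lemma sum_qprod_sqn_xtil_le x : (0 < k)%N ->
  \sum_(ii : {ffun 'I_k -> 'I_d}) qprod q ii * sqn (xtil q x ii) <=
  k%:R^-1 * \sum_(i < d) q i * sqn (xtil_r q x i) + sqn x.
Proof.
move=> k0; pose c l i := xtil_r q x i 0 l.
have expand ii : qprod q ii * sqn (xtil q x ii) = \sum_(l < d) k%:R^-1 ^+ 2 *
    \sum_(r < k) \sum_(s < k) qprod q ii * (c l (ii r) * c l (ii s)).
  rewrite /sqn mulr_sumr; apply: eq_bigr => l _.
  rewrite xtil_coord exprMn expr2 [X in _ * (_ * X)]big_distrlr /= !mulr_sumr.
  by apply: eq_bigr => r _; rewrite !mulr_sumr; apply: eq_bigr => s _; rewrite mulrCA.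
have coord_moment l : \sum_(ii : {ffun 'I_k -> 'I_d}) k%:R^-1 ^+ 2 *
    \sum_(r < k) \sum_(s < k) qprod q ii * (c l (ii r) * c l (ii s)) <=
    k%:R^-1 * \sum_(i < d) q i * (c l i * c l i) + x 0 l ^+ 2.
  rewrite -mulr_sumr exchange_big /=.
  under eq_bigr do rewrite exchange_big /=.
  under eq_bigr do under eq_bigr do rewrite sum_qprod_mul.
  have M0 : 0 <= (\sum_(i < d) q i * c l i) * (\sum_(i < d) q i * c l i).
    by rewrite -expr2 sqr_ge0.
  apply: le_trans (sum_pairs_le _ k0 M0) _.
  by rewrite lerD2l -expr2 sqr_mean_xtil_r_coord_le.
rewrite (eq_bigr _ (fun ii _ => expand ii)) exchange_big /=.
apply: le_trans (ler_sum _ (fun l _ => coord_moment l)) _.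
rewrite big_split /= -mulr_sumr lerD2r ler_wpM2l ?invr_ge0 // exchange_big /=.
rewrite le_eqVlt; apply/orP; left; apply/eqP; apply: eq_bigr => i _.
by rewrite /sqn mulr_sumr; apply: eq_bigr => l _; rewrite -expr2.
Qed.

Lemma sum_weighted_sqr_gtil_le (w x : 'rV[R]_d) (y B : R) :
  (0 < k)%N -> norm2 w <= B -> norm2 x <= 1 -> `|y| <= B ->
  \sum_(ii : {ffun 'I_k -> 'I_d}) \sum_(j < d)
     qprod q ii * pj w j * norm2 (gtil q w x y ii j) ^+ 2 <=
  4 * B ^+ 2 * (k%:R^-1 * \sum_(i < d) q i * sqn (xtil_r q x i) + 1).
Proof.
move=> k0 wB x1 yB.
have split_draws : \sum_(ii : {ffun 'I_k -> 'I_d}) \sum_(j < d)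
    qprod q ii * pj w j * norm2 (gtil q w x y ii j) ^+ 2 =
    (\sum_(j < d) pj w j * phitil w x y j ^+ 2) *
    \sum_(ii : {ffun 'I_k -> 'I_d}) qprod q ii * sqn (xtil q x ii).
  rewrite mulr_sumr; apply: eq_bigr => ii _; rewrite mulr_suml.
  by apply: eq_bigr => j _; rewrite sqr_norm2 sqn_scale; ring.
rewrite split_draws ler_pM ?sumr_ge0 ?sum_pj_sqr_phitil_le //.
- by move=> j _; rewrite mulr_ge0 ?pj_ge0 ?sqr_ge0.
- by move=> ii _; rewrite mulr_ge0 ?qprod_ge0 ?sqn_ge0.
apply: le_trans (sum_qprod_sqn_xtil_le x k0) _.
by rewrite lerD2l -(expr1n R 2) sqn_le_sqr.
Qed.

End IndexDraws.

Section Integrals.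
Variables (R : realType) (d0 : measure_display) (T : measurableType d0).
Local Open Scope ereal_scope.
Implicit Types (f g : T -> \bar R).

Lemma ge0_le_integral_nonmeasurable (mu : measure T R) f g :
  (forall x, 0 <= f x) -> (forall x, f x <= g x) ->
  \int[mu]_x f x <= \int[mu]_x g x.
Proof.
move=> f0 fg; have g0 x : 0 <= g x by apply: le_trans (f0 x) (fg x).
rewrite (ge0_integralTE mu f0) (ge0_integralTE mu g0).
by apply: ereal_sup_le => _ [h hf <-]; exists h => //= x; apply: le_trans (hf x) (fg x).
Qed.

(* Adding [+oo] on the null set where [f <= g] fails keeps [g] measurable
   and its integral unchanged. *)
Lemma ge0_ae_le_integral_nonmeasurable (mu : measure T R) f g :
  (forall x, 0 <= f x) -> (forall x, 0 <= g x) -> measurable_fun setT g ->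
  {ae mu, forall x, f x <= g x} -> \int[mu]_x f x <= \int[mu]_x g x.
Proof.
move=> f0 g0 mg [N [mN muN0 fgN]].
have ind0 x : setT x -> 0 <= (\1_N x : R)%:E by move=> _; rewrite lee_fin.
have mind : measurable_fun setT (fun x => (\1_N x : R)%:E).
  by apply/measurable_EFinP; exact: measurable_indic.
pose g' x := g x + +oo * (\1_N x)%:E.
apply: le_trans (ge0_le_integral_nonmeasurable mu (g := g') f0 _) _.
  move=> x; rewrite /g'; case: (pselect (N x)) => Nx.
    have gNy : g x != -oo by rewrite gt_eqF // (lt_le_trans ltNy0 (g0 x)).
    by rewrite indicE mem_set // mule1 addey ?leey.
  rewrite indicE memNset // mule0 adde0.
  by apply: contrapT => nfg; apply: Nx; apply: fgN.
have oo0 x : setT x -> 0 <= +oo * (\1_N x : R)%:E.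
  by move=> _; rewrite mule_ge0 ?lee_fin.
rewrite (ge0_integralD mu measurableT (fun x _ => g0 x) mg oo0 (measurable_funeM _ mind)).
rewrite (ge0_integralZl mu measurableT mind ind0 (leey 0)).
by rewrite integral_indic // setIT muN0 mule0 adde0.
Qed.

Lemma integral_cst_probability (P : probability T R) (c : \bar R) :
  \int[P]_x c = c.
Proof.
have PT : (P : {measure set T -> \bar R}) setT = 1 := probability_setT P.
by rewrite integral_cst // PT mule1.
Qed.

Lemma integral_le_cst (P : probability T R) f (C : \bar R) :
  0 <= C -> (forall x, 0 <= f x) -> (forall x, f x <= C) -> \int[P]_x f x <= C.
Proof.
move=> C0 f0 fC.
apply: le_trans (ge0_le_integral_nonmeasurable P (g := cst C) f0 fC) _.
by rewrite integral_cst_probability.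
Qed.

Lemma ge0_integral_affine (P : probability T R) (a b : R) (G : T -> R) :
  (0 <= a)%R -> (0 <= b)%R -> (forall x, 0 <= G x)%R -> measurable_fun setT G ->
  \int[P]_x (a * (b * G x + 1))%:E = a%:E * (b%:E * \int[P]_x (G x)%:E + 1).
Proof.
move=> a0 b0 G0 mG.
have bG0 x : setT x -> 0 <= (b * G x)%:E by move=> _; rewrite lee_fin mulr_ge0.
have mbG : measurable_fun setT (fun x => (b * G x)%:E).
  by apply/measurable_EFinP; apply: measurable_funM => //; exact: measurable_cst.
have bG10 x : setT x -> 0 <= (b * G x + 1)%:E.
  by move=> _; rewrite lee_fin addr_ge0 ?mulr_ge0.
have mbG1 : measurable_fun setT (fun x => (b * G x + 1)%:E).
  apply/measurable_EFinP; apply: measurable_funD; last exact: measurable_cst.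
  exact/measurable_EFinP.
have G0' x : setT x -> 0 <= (G x)%:E by move=> _; rewrite lee_fin.
have mG' : measurable_fun setT (fun x => (G x)%:E) by exact/measurable_EFinP.
have one0 x : setT x -> 0 <= (cst 1 : T -> \bar R) x by move=> _; exact: lee01.
under eq_integral do rewrite EFinM.
rewrite (ge0_integralZl_EFin P measurableT bG10 mbG1 a0).
under eq_integral do rewrite EFinD.
rewrite (ge0_integralD P measurableT bG0 mbG one0 (measurable_cst _)).
under eq_integral do rewrite EFinM.
rewrite (ge0_integralZl_EFin P measurableT G0' mG' b0).
by rewrite integral_cst_probability.
Qed.

End Integrals.

Lemma norm2_update_le (R : realType) (d k : nat) (B eta : R) (q : 'I_d -> R)
  (w x : 'rV[R]_d) (y : R) (ii : {ffun 'I_k -> 'I_d}) (j : 'I_d) :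
  0 < B -> norm2 (update B eta q w x y ii j) <= B.
Proof.
move=> B0; rewrite /update; set v := w - _.
have M0 : 0 < Num.max (norm2 v) B by rewrite lt_max B0 orbT.
rewrite norm2_scale ger0_norm ?divr_ge0 ?(ltW B0) ?(ltW M0) //.
by rewrite mulrAC ler_pdivrMr // ler_wpM2l ?(ltW B0) // le_max lexx.
Qed.

Section Iterates.
Variables (R : realType) (d k : nat) (d0 : measure_display) (T : measurableType d0).
Variables (P : probability T R) (X : T -> 'rV[R]_d) (Y : T -> R) (q : 'I_d -> R).
Hypotheses (q_ge0 : forall i, 0 <= q i) (sum_q : \sum_(i < d) q i = 1).
Local Open Scope ereal_scope.

Lemma sum_draw_weights_le1 (w : 'rV[R]_d) :
  (\sum_(ii : {ffun 'I_k -> 'I_d}) \sum_(j < d) qprod q ii * pj w j <= 1)%R.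
Proof.
rewrite -big_distrlr /= sum_qprod // mul1r; exact: sum_pj_le1.
Qed.

Section Step.
Variables (w : 'rV[R]_d) (F : 'rV[R]_d -> R -> {ffun 'I_k -> 'I_d} -> 'I_d -> \bar R).
Hypothesis F_ge0 : forall x y ii j, 0 <= F x y ii j.

Let weight_ge0 (ii : {ffun 'I_k -> 'I_d}) j : (0 <= qprod q ii * pj w j)%R.
Proof. by rewrite mulr_ge0 ?qprod_ge0 ?pj_ge0. Qed.

Let integrand_ge0 om : 0 <= \sum_(ii : {ffun 'I_k -> 'I_d}) \sum_(j < d)
  ((qprod q ii * pj w j)%:E * F (X om) (Y om) ii j).
Proof.
apply: sume_ge0 => ii _; apply: sume_ge0 => j _.
by apply: mule_ge0; rewrite ?lee_fin.
Qed.

Lemma step_E_ge0 : 0 <= step_E P X Y q w F.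
Proof. by apply: integral_ge0 => om _; exact: integrand_ge0. Qed.

Lemma step_E_le (C : \bar R) : 0 <= C -> (forall x y ii j, F x y ii j <= C) ->
  step_E P X Y q w F <= C.
Proof.
move=> C0 FC; apply: (integral_le_cst P C0 integrand_ge0) => om.
apply: (@le_trans _ _ (\sum_(ii : {ffun 'I_k -> 'I_d}) \sum_(j < d)
    ((qprod q ii * pj w j)%:E * C))).
  by apply: lee_sum => ii _; apply: lee_sum => j _; apply: lee_wpmul2l; rewrite ?lee_fin.
have sum_j (ii : {ffun 'I_k -> 'I_d}) : \sum_(j < d) ((qprod q ii * pj w j)%:E * C) =
    (\sum_(j < d) qprod q ii * pj w j)%:E * C.
  by rewrite -sumEFin ge0_sume_distrl // => j _; rewrite lee_fin weight_ge0.
under eq_bigr do rewrite sum_j.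
rewrite -ge0_sume_distrl ?sumEFin => [|ii _]; last by rewrite lee_fin sumr_ge0.
by rewrite -[leRHS]mul1e lee_wpmul2r // lee_fin sum_draw_weights_le1.
Qed.

End Step.

Lemma EW_le (B eta : R) (w1 : 'rV[R]_d) (C : \bar R) :
  (0 < B)%R -> 0 <= C -> (norm2 w1 <= B)%R ->
  forall n (h : 'rV[R]_d -> \bar R), (forall w, 0 <= h w) ->
  (forall w, (norm2 w <= B)%R -> h w <= C) ->
  EW k P X Y B eta q w1 n h <= C.
Proof.
move=> B0 C0 w1B n; elim: n => [|n IH] h h0 hC /=; first exact: hC.
apply: IH => [w|w _]; first exact: step_E_ge0.
by apply: step_E_le => // x y ii j; apply/hC/norm2_update_le.
Qed.

Let moment (om : T) : R := \sum_(i < d) q i * sqn (xtil_r q (X om) i).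

Let moment_ge0 om : (0 <= moment om)%R.
Proof. by apply: sumr_ge0 => i _; rewrite mulr_ge0 ?sqn_ge0. Qed.

Lemma E_sq_xrE : E_sq_xr P X q = \int[P]_om (moment om)%:E.
Proof.
apply: eq_integral => om _; rewrite sumEFin; congr EFin.
by apply: eq_bigr => i _; rewrite sqr_norm2.
Qed.

Lemma measurable_moment :
  (forall i, measurable_fun setT (fun om => X om 0%R i)) -> measurable_fun setT moment.
Proof.
move=> mX; apply: measurable_sum => i.
under eq_fun do rewrite sqn_xtil_r expr2.
apply: measurable_funM; first exact: measurable_cst.
by apply: measurable_funM; apply: measurable_funM => //; exact: measurable_cst.
Qed.

Lemma step_E_sq_gtil_le (B : R) (w : 'rV[R]_d) :
  (forall i, measurable_fun setT (fun om => X om 0%R i)) ->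
  {ae P, forall om, norm2 (X om) <= 1 /\ `|Y om| <= B}%R ->
  (0 < k)%N -> (norm2 w <= B)%R ->
  step_E P X Y q w (fun x y (ii : {ffun 'I_k -> 'I_d}) j =>
    (norm2 (gtil q w x y ii j) ^+ 2)%:E) <=
  (4 * B ^+ 2)%:E * ((k%:R^-1)%:E * E_sq_xr P X q + 1).
Proof.
move=> mX XY k0 wB.
have B0 : (0 <= B)%R by apply: le_trans wB; exact: sqrtr_ge0.
rewrite E_sq_xrE -ge0_integral_affine ?mulr_ge0 ?sqr_ge0 ?invr_ge0 //;
  last exact: measurable_moment.
apply: ge0_ae_le_integral_nonmeasurable.
- move=> om; apply: sume_ge0 => ii _; apply: sume_ge0 => j _.
  by apply: mule_ge0; rewrite lee_fin ?sqr_ge0 ?mulr_ge0 ?qprod_ge0 ?pj_ge0.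
- move=> om; rewrite lee_fin !mulr_ge0 ?sqr_ge0 //.
  by rewrite addr_ge0 ?mulr_ge0 ?invr_ge0 ?moment_ge0.
- apply/measurable_EFinP; apply: measurable_funM; first exact: measurable_cst.
  apply: measurable_funD; last exact: measurable_cst.
  by apply: measurable_funM; [exact: measurable_cst|exact: measurable_moment].
move: XY; apply: filterS => om [X1 YB].
under eq_bigr do under eq_bigr do rewrite -EFinM.
under eq_bigr do rewrite sumEFin.
by rewrite sumEFin lee_fin sum_weighted_sqr_gtil_le.
Qed.

End Iterates.

Theorem lemma3 (R : realType) (d k : nat) (d0 : measure_display)
  (T : measurableType d0) (P : probability T R)
  (X : T -> 'rV[R]_d) (Y : T -> R)
  (B eta : R) (q : 'I_d -> R) (w1 : 'rV[R]_d) :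
  (forall i : 'I_d, measurable_fun setT (fun om => X om 0 i)) ->
  measurable_fun setT Y ->
  {ae P, forall om, norm2 (X om) <= 1 /\ `|Y om| <= B} ->
  0 < B -> 0 < eta ->
  (forall i, 0 <= q i) -> \sum_(i < d) q i = 1 ->
  (0 < k)%N ->
  w1 != 0 -> norm2 w1 <= B ->
  forall n : nat,
    (E_sq_g k P X Y B eta q w1 n <=
     (4 * B ^+ 2)%:E * ((k%:R^-1)%:E * E_sq_xr P X q + 1))%E.
Proof.
move=> mX _ XY B0 _ q_ge0 sum_q k0 _ w1B n.
apply: EW_le => //.
- apply: mule_ge0; first by rewrite lee_fin mulr_ge0 ?sqr_ge0.
  apply: adde_ge0; last exact: lee01.
  apply: mule_ge0; first by rewrite lee_fin invr_ge0.
  apply: integral_ge0 => om _; apply: sume_ge0 => i _.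
  by rewrite lee_fin mulr_ge0 ?sqr_ge0.
- by move=> w; apply: step_E_ge0 => // x y ii j; rewrite lee_fin sqr_ge0.
- by move=> w wB; apply: step_E_sq_gtil_le.
Qed.
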